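(* Let $\{X_\alpha\}_{\alpha\in I}$ be a family of non-empty topological spaces. Then the product $\prod_{\alpha\in I}X_\alpha$ (with the Tychonoff product topology) is dense-connected if and only if every $X_\alpha$ is dense-connected.
   Context: A space $X$ is dense-connected if every dense subset of $X$ (with the subspace topology) is connected. *)

From HB Require Import structures.
From mathcomp Require Import all_boot all_order all_algebra.
From mathcomp Require Import all_classical all_reals topology.
Set Implicit Arguments. Unset Strict Implicit. Unset Printing Implicit Defensive.
Local Open Scope classical_set_scope.

(* A space X is dense-connected if every dense subset of X is connected
   (mathcomp's [connected A] is connectedness of A in the subspace topology). *)
Definition dense_connected (X : topologicalType) : Prop :=
  forall D : set X, dense D -> connected D.

From HB Require Import structures.
From mathcomp Require Import all_boot all_order all_algebra.
From mathcomp Require Import all_classical all_reals topology.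
Local Open Scope classical_set_scope.

(* The proof goes through hyperconnectedness: a space is hyperconnected when
   every non-empty open subset is dense (equivalently, any two non-empty open
   sets meet).
   1. A space is dense-connected iff it is hyperconnected
      ([hyperconnected_dense_connected], [dense_connected_hyperconnected]).  A dense set split by a clopen-in-D
      piece B = D ∩ C (C open) = D ∩ E (E closed) would give the non-empty
      open set C ∖ E, which D must meet; conversely, for U open, the dense set
      U ∪ ~ closure U can be connected only if U is dense.
   2. Hyperconnectedness passes to continuous surjective images; the
      projections of a product of non-empty spaces are such maps.
   3. The sets with dense interior form a filter; a space is hyperconnected
      as soon as this filter refines every neighbourhood filter.  For the
      product topology (a supremum of initial topologies) it suffices to check
      open cylinders, which are dense because projections are open maps. *)

Definition hyperconnected (T : topologicalType) : Prop :=
  forall U : set T, open U -> U !=set0 -> dense U.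

Section DenseConnected.
Variable T : topologicalType.

Lemma hyperconnected_dense_connected : hyperconnected T -> dense_connected T.
Proof.
move=> hT D dD B B0 [C oC BDC] [E cE BDE].
apply/seteqP; split; first by rewrite BDC; exact: subIsetl.
move=> x Dx; apply: contrapT => nBx.
have nEx : ~ E x by move=> Ex; apply: nBx; rewrite BDE.
have C0 : C !=set0 by case: B0 => b; rewrite BDC => -[_ Cb]; exists b.
have oCE : open (C `&` ~` E) by apply: openI => //; exact: closed_openC.
have CE0 : C `&` ~` E !=set0.
  by rewrite setIC; apply: (hT C oC C0); [exists x | exact: closed_openC].
have [d [[Cd nEd] Dd]] := dD _ CE0 oCE.
have : B d by rewrite BDC.
by rewrite BDE => -[].
Qed.

Lemma open_disjoint_closure {O U : set T} :
  open O -> O `&` U = set0 -> O `<=` ~` closure U.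
Proof.
move=> oO OU0; rewrite -interiorC -open_subsetE // => x Ox Ux.
by have : (O `&` U) x by []; rewrite OU0.
Qed.

Lemma dense_setU_closureC {U : set T} : open U -> dense (U `|` ~` closure U).
Proof.
move=> oU O [o Oo] oO.
have [OU0|/set0P [w [Ow Uw]]] := eqVneq (O `&` U) set0.
  by exists o; split=> //; right; exact: (open_disjoint_closure oO OU0).
by exists w; split=> //; left.
Qed.

Lemma dense_connected_hyperconnected : dense_connected T -> hyperconnected T.
Proof.
move=> dcT U oU U0 O O0 oO; apply/set0P/negP => /eqP OU0.
set D := U `|` ~` closure U.
have UD : U = D.
  apply: (dcT D (dense_setU_closureC oU) U U0).
    by exists U => //; rewrite setIUl setIid; apply/esym/setUidPl => y [].
  exists (closure U); first exact: closed_closure.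
  rewrite setIUl setICl setU0; apply/esym/setIidPl; exact: subset_closure.
have [o Oo] := O0.
have : D o by right; exact: (open_disjoint_closure oO OU0).
by rewrite -UD => Uo; have : (O `&` U) o by []; rewrite OU0.
Qed.

End DenseConnected.

Lemma hyperconnected_image (S T : topologicalType) (f : S -> T) :
  continuous f -> (forall y : T, exists x, f x = y) ->
  hyperconnected S -> hyperconnected T.
Proof.
move=> fc fsurj hS U oU [u Uu] O [o Oo] oO.
have preim_open A : open A -> open (f @^-1` A).
  exact: (proj1 (continuousP f)).
have fU0 : f @^-1` U !=set0.
  by have [u' fu'] := fsurj u; exists u'; rewrite /= fu'.
have fO0 : f @^-1` O !=set0.
  by have [o' fo'] := fsurj o; exists o'; rewrite /= fo'.
have [z [Oz Uz]] := hS _ (preim_open _ oU) fU0 _ fO0 (preim_open _ oO).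
by exists (f z).
Qed.

Lemma proj_surjective (I : eqType) (X : I -> topologicalType) :
  (forall i, [set: X i] !=set0) ->
  forall i (x : X i), exists f : prod_topology X, proj i f = x.
Proof.
move=> hne i x; pose f0 j := projT1 (cid (hne j)).
by exists (dfwith f0 i x); rewrite /proj dfwithin.
Qed.

Lemma open_map_preimage_dense (S T : topologicalType) (f : S -> T) :
  (forall A, open A -> open (f @` A)) ->
  forall D, dense D -> dense (f @^-1` D).
Proof.
move=> fopen D dD V [v Vv] oV.
have fV0 : f @` V !=set0 by exists (f v); exact: imageP.
have [_ [[h Vh <-] Dfh]] := dD (f @` V) fV0 (fopen V oV).
by exists h.
Qed.

Section DenseInteriorFilter.
Variable T : topologicalType.

Definition dense_interior : set_system T := [set A | dense A°].

Lemma dense_subset (A B : set T) : A `<=` B -> dense A -> dense B.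
Proof.
move=> AB dA O O0 oO; have [x [Ox Ax]] := dA O O0 oO.
by exists x; split=> //; exact: AB.
Qed.

(* The sets with dense interior form a filter: finite intersections of dense
   open sets are dense and open. *)
Global Instance dense_interior_filter : Filter dense_interior.
Proof.
constructor; rewrite /dense_interior /=.
- by rewrite (proj1 (interior_id _) openT) => O O0 _; rewrite setIT.
- move=> A B dA dB /=; rewrite interiorI.
  by apply: denseI => //; exact: open_interior.
- move=> A B AB; apply: dense_subset => x /=.
  rewrite /interior => /filterS; apply; exact: AB.
Qed.

Lemma open_dense_interior (U : set T) : open U -> dense U -> dense_interior U.
Proof. by move=> oU; rewrite /dense_interior /= (proj1 (interior_id U) oU). Qed.

Lemma hyperconnected_dense_interior :
  (forall x : T, dense_interior --> x) -> hyperconnected T.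
Proof.
move=> cvgT U oU [u Uu].
have : dense_interior U by apply: (cvgT u); exact: open_nbhs_nbhs.
by rewrite /dense_interior /= (proj1 (interior_id U) oU).
Qed.

End DenseInteriorFilter.

(* A product of hyperconnected spaces is hyperconnected: through the
   description of the product topology as a supremum of initial topologies,
   it suffices that open cylinders over non-empty opens are dense, which holds
   since projections are open maps. *)
Lemma prod_hyperconnected (I : eqType) (X : I -> topologicalType) :
  (forall i, hyperconnected (X i)) -> hyperconnected (prod_topology X).
Proof.
move=> hX; apply: hyperconnected_dense_interior => f.
apply/cvg_sup => i A /= [_ [[B oB <-] Bf BA]].
apply: (@filterS _ _ (dense_interior_filter (prod_topology X)) _ _ BA).
apply: open_dense_interior.
  by apply: (proj1 (continuousP _)) oB; exact: proj_continuous.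
apply: open_map_preimage_dense; first exact: proj_open.
by apply: hX => //; exists (f i).
Qed.

Theorem proposition4p12 (I : Type) (X : I -> topologicalType)
  (hne : forall i : I, [set: X i] !=set0) :
  dense_connected (prod_topology X) <-> (forall i : I, dense_connected (X i)).
Proof.
pose PX := prod_topology (X : {classic I} -> _).
split=> [dcP i | dcX].
- apply/hyperconnected_dense_connected.
  apply: (@hyperconnected_image PX _ (proj i)).
  + exact: proj_continuous.
  + exact: proj_surjective.
  + exact: dense_connected_hyperconnected.
- apply/(@hyperconnected_dense_connected PX).
  apply: prod_hyperconnected => i.
  exact: dense_connected_hyperconnected.
Qed.
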